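(* Let $F$ be a connected graph of order at least $2$ with vertices $x_1,\dots,x_{|V(F)|}$. For each $i$, take a new graph $T_i\in\{C_{4,2},C_{5,1}\}$ (all vertex-disjoint from each other and from $F$) and identify the leaf of $T_i$ with $x_i$; call the resulting graph $G_F$. Then $\gamma^{d}_2(G_F)=\frac{|V(G_F)|}{3}$.
   Context: All graphs are finite and simple. A set $S$ of vertices of a graph $G$ is a disjunctive dominating set of $G$ if every vertex not in $S$ is adjacent to a vertex of $S$ or has at least two vertices of $S$ at distance exactly $2$ from it in $G$. The disjunctive domination number $\gamma^{d}_2(G)$ is the minimum cardinality of a disjunctive dominating set of $G$. For $s\geq 3$ and $t\geq 1$, $C_{s,t}$ denotes the graph obtained from a cycle $C_s$ and a path with $t$ edges by identifying one end vertex of the path with a vertex of the cycle; the other end vertex of the path (of degree $1$) is called the leaf of $C_{s,t}$. Thus $C_{4,2}$ and $C_{5,1}$ each have $6$ vertices. *)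

From mathcomp Require Import all_boot.
Set Implicit Arguments. Unset Strict Implicit. Unset Printing Implicit Defensive.

(* Simple graphs: vertex set a finType T, adjacency a symmetric irreflexive
   boolean relation e. *)

Section Graphs.
Variable T : finType.
Variable e : rel T.

Definition dist2 (u v : T) : bool :=
  [&& u != v, ~~ e u v & [exists w, e u w && e w v]].

Definition disj_dom (S : {set T}) : bool :=
  [forall v, (v \notin S) ==>
     ([exists u in S, e v u] || (2 <= #|[set u in S | dist2 v u]|))].

(* disjunctive domination number: minimum cardinality of a disjunctive
   dominating set ([set: T] is one, so the minimum is attained). *)
Definition gamma_d2 : nat :=
  #|[arg min_(S < [set: T] | disj_dom S) #|S|]|.
End Graphs.

(* C_{s,t} on vertices 0 .. s+t-1: the path 0 - 1 - ... - t (t edges, leaf 0)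
   and the cycle t - (t+1) - ... - (t+s-1) - t. *)
Definition cst_adj (s t i j : nat) : bool :=
  [|| (i.+1 == j) && (j < s + t), (j.+1 == i) && (i < s + t),
      (i == t) && (j == t + s - 1) | (j == t) && (i == t + s - 1)].

(* Both C_{4,2} and C_{5,1} have 6 vertices; true selects C_{4,2},
   false selects C_{5,1}. Vertex 0 is the leaf. *)
Definition T_adj (b : bool) (i j : 'I_6) : bool :=
  if b then cst_adj 4 2 i j else cst_adj 5 1 i j.

(* The graph G_F: vertex (x, 0) is x itself (identified with the leaf of T_x),
   vertices (x, i), i > 0, are the other vertices of the copy T_x. *)
Definition GF_adj (T : finType) (e : rel T) (kind : T -> bool)
  : rel (T * 'I_6) :=
  fun p q =>
    ((p.2 == ord0) && (q.2 == ord0) && e p.1 q.1)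
    || ((p.1 == q.1) && T_adj (kind p.1) p.2 q.2).

From mathcomp Require Import all_boot.
Set Implicit Arguments. Unset Strict Implicit. Unset Printing Implicit Defensive.

(* Vertices 2..5 of a gadget T_x have all their neighbours and all vertices at
   distance 2 inside T_x, so a brute-force check over the 2^6 traces of a set
   on T_x shows that every disjunctive dominating set of G_F meets each gadget
   in at least two vertices.  Conversely, picking {1, 4} in each C_{4,2} and
   {1, 3} in each C_{5,1} dominates every vertex of G_F.  Hence
   gamma_d2(G_F) = 2|V(F)| = |V(G_F)|/3. *)

Lemma gamma_d2_eq (T : finType) (e : rel T) (S : {set T}) :
  disj_dom e S -> (forall S', disj_dom e S' -> #|S| <= #|S'|) ->
  gamma_d2 e = #|S|.
Proof.
move=> domS minS; rewrite /gamma_d2; case: arg_minnP.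
  by apply/forallP => v; rewrite in_setT.
move=> S0 domS0 minS0; apply/eqP; rewrite eqn_leq minS0 //.
exact: minS.
Qed.

Lemma card_ord_count n (P : pred nat) :
  #|[set j : 'I_n | P j]| = count P (iota 0 n).
Proof.
rewrite -val_enum_ord count_map enumT cardE /enum_mem size_filter.
by apply: eq_count => j /=; rewrite inE.
Qed.

Lemma card_pair_fibres (T U : finType) (S : {set T * U}) :
  #|S| = \sum_(x : T) #|[set y : U | (x, y) \in S]|.
Proof.
rewrite -sum1_card big_mkcond /=.
rewrite (eq_bigr (fun p => if (p.1, p.2) \in S then 1 else 0)); last by case.
rewrite -(pair_bigA _ (fun x y => if (x, y) \in S then 1 else 0)) /=.
apply: eq_bigr => x _; rewrite -sum1_card [RHS]big_mkcond.
by apply: eq_bigr => y _; rewrite inE.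
Qed.

(* Gadget vertices are handled as plain naturals 0..5, with neighbourhoods
   scanned along [iota 0 6]: unlike cardinals of finite sets, these tests
   evaluate, which makes the exhaustive check below a computation. *)
Section Gadget.
Variable b : bool.

Definition gadget_adj (i j : nat) : bool :=
  if b then cst_adj 4 2 i j else cst_adj 5 1 i j.

Definition gadget_dist2 (i j : nat) : bool :=
  [&& i != j, ~~ gadget_adj i j
    & has (fun m => gadget_adj i m && gadget_adj m j) (iota 0 6)].

Definition gadget_dominated (s : pred nat) (k : nat) : bool :=
  [|| s k, has (fun j => s j && gadget_adj k j) (iota 0 6)
    | 1 < count (fun j => s j && gadget_dist2 k j) (iota 0 6)].

Lemma gadget_adj_inner0 k : 1 < k -> gadget_adj k 0 = false.
Proof.
by rewrite /gadget_adj /cst_adj; case: b; case: k => [|[|k]] //=; rewrite andbF.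
Qed.

Lemma gadget_dominated_count (s : pred nat) :
  (forall k, 1 < k < 6 -> gadget_dominated s k) -> 1 < count s (iota 0 6).
Proof.
move=> dom; move: (dom 2 erefl) (dom 3 erefl) (dom 4 erefl) (dom 5 erefl).
rewrite /gadget_dominated /gadget_dist2 /gadget_adj /=.
by case: b; case: (s 0); case: (s 1); case: (s 2); case: (s 3); case: (s 4);
  case: (s 5).
Qed.

Definition gadget_core (j : nat) : bool :=
  (j == 1) || (j == if b then 4 else 3).

Lemma gadget_core_count : count gadget_core (iota 0 6) = 2.
Proof. by rewrite /gadget_core; case: b. Qed.

Lemma gadget_core_dominates k :
  k < 6 -> ~~ gadget_core k ->
  has (fun j => gadget_core j && gadget_adj k j) (iota 0 6).
Proof.
by rewrite /gadget_core /gadget_adj; case: b; case: k => [|[|[|[|[|[|k]]]]]].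
Qed.

End Gadget.

Section GF.
Variables (T : finType) (e : rel T) (kind : T -> bool).
Local Notation G := (GF_adj e kind).

Definition gadget_trace (S : {set T * 'I_6}) (x : T) : pred nat :=
  fun j => (x, inord j) \in S.

Lemma gadget_trace_ord S x (j : 'I_6) : gadget_trace S x j = ((x, j) \in S).
Proof. by rewrite /gadget_trace inord_val. Qed.

Lemma GF_adj_inner x (k : 'I_6) y j :
  1 < k -> G (x, k) (y, j) = (x == y) && gadget_adj (kind x) k j.
Proof. by case: k => -[|[|k]]. Qed.

Lemma GF_dist2_inner x (k : 'I_6) y j :
  1 < k -> dist2 G (x, k) (y, j) -> (x == y) && gadget_dist2 (kind x) k j.
Proof.
move=> k1 /and3P [neq nadj /existsP [[z m] /andP [kz zj]]].
rewrite !GF_adj_inner // in kz nadj; case/andP: kz => /eqP xz km; subst z.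
have m0 : m != ord0.
  by apply: contraTneq km => ->; rewrite gadget_adj_inner0.
move: zj; rewrite /GF_adj /= (negbTE m0) /= => /andP [/eqP xy mj]; subst y.
rewrite eqxx /= in nadj.
rewrite eqxx /gadget_dist2 nadj andTb; apply/andP; split.
  by apply: contra neq => /eqP/val_inj ->.
by apply/hasP; exists (val m); rewrite ?mem_iota ?ltn_ord ?km.
Qed.

Lemma disj_dom_gadget_dominated S x k :
  disj_dom G S -> 1 < k < 6 -> gadget_dominated (kind x) (gadget_trace S x) k.
Proof.
move=> /forallP /(_ (x, inord k)) domS /andP [k1 k6].
have kK : (inord k : 'I_6) = k :> nat by rewrite inordK.
have k1' : 1 < (inord k : 'I_6) by rewrite kK.
rewrite /gadget_dominated {1}/gadget_trace.
case: ((x, inord k) \in S) domS => //; rewrite orFb.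
case/orP=> [/existsP [[y j] /andP [uS]] | dist2S].
  rewrite GF_adj_inner // kK => /andP [/eqP xy kj]; subst y; apply/orP; left.
  apply/hasP; exists (val j); first by rewrite mem_iota ltn_ord.
  by rewrite gadget_trace_ord uS.
apply/orP; right; rewrite -card_ord_count (leq_trans dist2S) //.
set D := [set j : 'I_6 | _].
apply: (@leq_trans #|pair x @: D|); last exact: leq_imset_card.
apply/subset_leq_card/subsetP => -[y j]; rewrite inE => /andP [uS].
move/GF_dist2_inner => /(_ k1') /andP [/eqP xy d2]; subst y.
by apply/imsetP; exists j; rewrite // inE gadget_trace_ord uS -kK.
Qed.

Lemma disj_dom_card S : disj_dom G S -> 2 * #|T| <= #|S|.
Proof.
move=> domS; rewrite card_pair_fibres mulnC -sum_nat_const.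
apply: leq_sum => x _.
rewrite (eq_card (B := [set j : 'I_6 | gadget_trace S x j])); last first.
  by move=> j; rewrite !inE gadget_trace_ord.
rewrite card_ord_count; apply: gadget_dominated_count => k.
exact: disj_dom_gadget_dominated.
Qed.

Definition GF_core : {set T * 'I_6} :=
  [set p : T * 'I_6 | gadget_core (kind p.1) p.2].

Lemma disj_dom_GF_core : disj_dom G GF_core.
Proof.
apply/forallP => -[x i]; apply/implyP; rewrite inE /= => ncore.
case/hasP: (gadget_core_dominates (ltn_ord i) ncore) => j.
rewrite mem_iota add0n => /andP [_ j6] /andP [cj ij].
apply/orP; left; apply/existsP; exists (x, Ordinal j6).
by rewrite inE cj /GF_adj /= eqxx; apply/orP; right.
Qed.

Lemma card_GF_core : #|GF_core| = 2 * #|T|.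
Proof.
rewrite card_pair_fibres mulnC -sum_nat_const; apply: eq_bigr => x _.
rewrite -[RHS](gadget_core_count (kind x)) -card_ord_count.
by apply: eq_card => j; rewrite !inE.
Qed.

Lemma gamma_d2_GF : gamma_d2 G = 2 * #|T|.
Proof.
rewrite -card_GF_core; apply: gamma_d2_eq disj_dom_GF_core _ => S domS.
by rewrite card_GF_core disj_dom_card.
Qed.

End GF.

Theorem mainTheorem3 (T : finType) (e : rel T)
  (e_sym : symmetric e) (e_irr : irreflexive e)
  (F_conn : forall x y : T, connect e x y)
  (F_order : 2 <= #|T|)
  (kind : T -> bool) :
  3 * gamma_d2 (GF_adj e kind) = #|{: T * 'I_6}|.
Proof. by rewrite gamma_d2_GF card_prod card_ord mulnA mulnC. Qed.
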